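(* Let $k\ge1$ and $t\ge0$ be integers, and let $P_j=\prod_{i=1}^{j}\big(1-\frac{1}{2^i}\big)$. Regarding each of the following as functions of $n$ variables for any $n$ at least the largest variable index appearing, we have: \[\mathrm{dt}_k(x_1\cdots x_k)=P_k,\] \[\mathrm{dt}_k(x_1\cdots x_k\oplus x_{k+1}\cdots x_{2k})=2P_k(1-P_k),\] \[\mathrm{dt}_{k+t}\big(x_{2k+1}\cdots x_{2k+t}(x_1\cdots x_k\oplus x_{k+1}\cdots x_{2k})\big)=2P_{k+t}(1-P_k).\]
   Context: $\oplus$ denotes addition in $\mathbb{F}_2$ and $\mathbb{F}_2^n$. For $f:\mathbb{F}_2^n\to\mathbb{F}_2$ and $1\le k\le n$, \[\mathrm{dt}_k(f)=\frac{\big|\{(u_0,\dots,u_k)\in(\mathbb{F}_2^n)^{k+1}:\ \bigoplus_{c_1,\dots,c_k\in\mathbb{F}_2} f\big((\bigoplus_{i=1}^k c_iu_i)\oplus u_0\big)\neq0\}\big|}{2^{(k+1)n}}.\] *)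

(* F_2 is modelled by bool, with addition = addb (xor),
   multiplication = andb. F_2^n is {ffun 'I_n -> bool}. *)
From mathcomp Require Import all_boot all_order all_algebra.
Set Implicit Arguments. Unset Strict Implicit. Unset Printing Implicit Defensive.
Import Order.TTheory GRing.Theory Num.Theory.

Definition vec (n : nat) := {ffun 'I_n -> bool}.
Definition boolfun (n : nat) := vec n -> bool.

(* (c_1 u_1 (+) ... (+) c_k u_k) (+) u_0, where u : 'I_k.+1 -> vec n,
   u ord0 = u_0 and u (lift ord0 i) = u_{i+1}, c : 'I_k -> bool. *)
Definition comb (n k : nat) (u : {ffun 'I_k.+1 -> vec n}) (c : {ffun 'I_k -> bool})
  : vec n :=
  [ffun j => (\big[addb/false]_(i < k) (c i && u (lift ord0 i) j)) (+) u ord0 j].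

Definition deriv (n k : nat) (f : boolfun n) (u : {ffun 'I_k.+1 -> vec n}) : bool :=
  \big[addb/false]_(c : {ffun 'I_k -> bool}) f (comb u c).

Definition dt (n k : nat) (f : boolfun n) : rat :=
  (#|[set u : {ffun 'I_k.+1 -> vec n} | deriv f u]|)%:R
  / (2 ^ ((k.+1) * n))%:R.

(* the variable x_i (1-based indexing) of x in F_2^n; meaningful for 1 <= i <= n *)
Definition xvar (n : nat) (x : vec n) (i : nat) : bool :=
  [exists j : 'I_n, (j.+1 == i) && x j].

(* the monomial x_a x_{a+1} ... x_b (empty product = 1 if b < a) *)
Definition mono (n a b : nat) (x : vec n) : bool :=
  \big[andb/true]_(a <= i < b.+1) xvar x i.

Definition P (j : nat) : rat :=
  \prod_(1 <= i < j.+1) (1 - 1 / (2 ^ i)%:R).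

(* The proof reduces everything to counting invertible matrices over F_2.
   - Derivatives of monomials (Section MonomialDerivative): the K-th
     derivative of x_{s_1}...x_{s_K} at (u_0,...,u_K) is det(u_i(s_j))_{j,i}
     over F_2.  Expanding the product of the affine forms (comb u c)(s_j),
     the sum over c in F_2^K of c_{phi 1}...c_{phi K} is odd exactly when
     phi : [1..K] -> [0..K] covers [1..K], i.e. is a permutation.
   - Transfer (Section Transfer): if the derivative only depends on the
     m x K matrix of the first m coordinates of u_1..u_K, then dt_K is the
     density of the corresponding event on matrices, since this linear
     projection has fibres of equal size.
   - Counting: by the order of GL_m(F_2) a uniform m x m matrix is invertible
     with probability P_m (first identity); pairs where exactly one of two
     events holds are counted by [sum_xor_pairs]; the completions of a t-row
     block T into an invertible matrix are either none or as many as for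
     (0 | I_t) (Section Completions), which gives the third identity.
   The second identity is the case t = 0 of the third. *)
From Pilot Require Import Defs.
From mathcomp Require Import all_boot all_order all_algebra all_fingroup.
From mathcomp.algebra_tactics Require Import ring.
From mathcomp Require Import zify.
Import Order.TTheory GRing.Theory Num.Theory.
Set Implicit Arguments. Unset Strict Implicit. Unset Printing Implicit Defensive.
Local Open Scope ring_scope.

Definition b2f (b : bool) : 'F_2 := (b : nat)%:R.

Lemma b2f_xor a b : b2f (a (+) b) = b2f a + b2f b.
Proof. by case: a; case: b => //; apply/eqP. Qed.

Lemma b2f_and a b : b2f (a && b) = b2f a * b2f b.
Proof. by case: a; case: b; rewrite /b2f /= ?mul1r ?mul0r. Qed.

Lemma b2f_neq0 b : (b2f b != 0) = b.
Proof. by case: b => //; apply/eqP. Qed.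

Lemma b2fK (x : 'F_2) : b2f (x != 0) = x.
Proof. by case: x => [[|[|m]] Hm] //; apply/val_inj. Qed.

Lemma b2f_bigxor (I : Type) (r : seq I) (p : pred I) (F : I -> bool) :
  b2f (\big[addb/false]_(i <- r | p i) F i) = \sum_(i <- r | p i) b2f (F i).
Proof. by rewrite (big_morph b2f b2f_xor (erefl (b2f false))). Qed.

Lemma b2f_bigand (I : Type) (r : seq I) (p : pred I) (F : I -> bool) :
  b2f (\big[andb/true]_(i <- r | p i) F i) = \prod_(i <- r | p i) b2f (F i).
Proof. by rewrite (big_morph b2f b2f_and (erefl (b2f true))). Qed.

Section MonomialDerivative.
Variable K : nat.

(* (1, c_1, ..., c_K): the coefficients of u_0, u_1, ..., u_K in [comb u c]. *)
Definition coefs (c : {ffun 'I_K -> bool}) (i : 'I_K.+1) : bool :=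
  if unlift ord0 i is Some i' then c i' else true.

Definition covering (phi : {ffun 'I_K -> 'I_K.+1}) : bool :=
  [forall i, [exists j, phi j == lift ord0 i]].

(* The monomial c_{phi 1} ... c_{phi K} (with c_0 = 1) takes the value 1 at
   2^(number of indices missed by phi) points c, an odd number iff phi covers. *)
Lemma sum_coefs_monomial (phi : {ffun 'I_K -> 'I_K.+1}) :
  \sum_(c : {ffun 'I_K -> bool}) \prod_(j < K) b2f (coefs c (phi j))
  = b2f (covering phi).
Proof.
pose missed := [pred i : 'I_K | ~~ [exists j, phi j == lift ord0 i]].
have support c : [forall j, coefs c (phi j)] = (c \in pffun_on true missed predT).
  apply/forallP/pffun_onP => [Hc | [Hs _] j].
    split=> //; apply/subsetP => i; rewrite !inE => ci.
    apply/negP => /existsP [j /eqP pj].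
    by move: (Hc j); rewrite /coefs pj liftK => h; rewrite h in ci.
  rewrite /coefs; case: (unliftP ord0 (phi j)) => [i pj|//].
  have := subsetP Hs i; rewrite !inE; case: (c i) => // /(_ isT) /negP; case.
  by apply/existsP; exists j; rewrite pj.
transitivity ((#|pffun_on true missed predT|)%:R : 'F_2).
  rewrite -sum1_card natr_sum [RHS]big_mkcond; apply: eq_bigr => c _.
  by rewrite -b2f_bigand big_andE support; case: (c \in _).
rewrite card_pffun_on natrX card_bool.
have -> : (2%:R : 'F_2) = 0 by apply/eqP.
by rewrite expr0n.
Qed.

Definition shift_perm (sg : 'S_K) : {ffun 'I_K -> 'I_K.+1} :=
  [ffun j => lift ord0 (sg j)].

Lemma shift_perm_inj : injective shift_perm.
Proof.
move=> s1 s2 h; apply/permP => j.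
by have := congr1 (fun f : {ffun 'I_K -> 'I_K.+1} => f j) h; rewrite !ffunE => /lift_inj.
Qed.

Lemma covering_shift_perm : [set phi | covering phi] = shift_perm @: setT.
Proof.
apply/setP => phi; rewrite inE; apply/idP/imsetP => [/forallP cov | [sg _ ->]].
  pose psi (i : 'I_K) : 'I_K := odflt i [pick j | phi j == lift ord0 i].
  have psiP i : phi (psi i) = lift ord0 i.
    rewrite /psi; case: pickP => [j /eqP //|H].
    by have /existsP [j /eqP hj] := cov i; move: (H j); rewrite hj eqxx.
  have psi_inj : injective psi.
    by move=> a b h; apply: (@lift_inj _ ord0); rewrite -!psiP h.
  exists (perm psi_inj)^-1%g => //.
  by apply/ffunP => j; rewrite ffunE -{1}(permKV (perm psi_inj) j) permE psiP.
apply/forallP => i; apply/existsP; exists (sg^-1%g i).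
by rewrite ffunE permKV.
Qed.

Variables (n : nat) (s : 'I_K -> nat).

Definition monomial (x : vec n.+1) : bool := \big[andb/true]_(j < K) x (inord (s j)).

Definition pointmx (u : {ffun 'I_K.+1 -> vec n.+1}) : 'M['F_2]_(K, K.+1) :=
  \matrix_(j, i) b2f (u i (inord (s j))).

Definition dirmx (u : {ffun 'I_K.+1 -> vec n.+1}) : 'M['F_2]_K :=
  \matrix_(j, i) b2f (u (lift ord0 i) (inord (s j))).

Lemma comb_coord u c j :
  b2f (comb u c (inord (s j))) = \sum_(i < K.+1) b2f (coefs c i) * pointmx u j i.
Proof.
rewrite /comb ffunE b2f_xor b2f_bigxor big_ord_recl addrC /coefs unlift_none.
rewrite mul1r mxE; congr (_ + _).
by apply: eq_bigr => i _; rewrite liftK b2f_and mxE.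
Qed.

(* The K-th derivative of a degree-K monomial is the determinant of the
   directions' coordinates: the sum of the expanded products over c keeps
   exactly the permutation terms. *)
Lemma deriv_monomial u : Defs.deriv monomial u = (\det (dirmx u) != 0).
Proof.
suff <- : b2f (Defs.deriv monomial u) = \det (dirmx u) by rewrite b2f_neq0.
rewrite /Defs.deriv b2f_bigxor.
transitivity (\sum_(c : {ffun 'I_K -> bool}) \sum_(phi : {ffun 'I_K -> 'I_K.+1})
   (\prod_(j < K) b2f (coefs c (phi j))) * \prod_(j < K) pointmx u j (phi j)).
  apply: eq_bigr => c _; rewrite b2f_bigand.
  under eq_bigr => j _ do rewrite comb_coord.
  by rewrite bigA_distr_bigA; apply: eq_bigr => phi _; rewrite big_split.
rewrite exchange_big.
under eq_bigr => phi _ do rewrite -big_distrl sum_coefs_monomial.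
rewrite (bigID covering) /= [X in _ + X]big1 ?addr0; last first.
  by move=> phi /negbTE ->; rewrite mul0r.
under eq_bigr => phi -> do rewrite mul1r.
rewrite (eq_bigl (fun phi => phi \in [set phi | covering phi])) => [|phi]; last by rewrite inE.
rewrite covering_shift_perm big_imset /=; last by move=> a b _ _; apply: shift_perm_inj.
rewrite /determinant; apply: eq_big => [sg|sg _]; first by rewrite inE.
have -> : (-1 : 'F_2) = 1 by apply/eqP.
by rewrite expr1n mul1r; apply: eq_bigr => j _; rewrite ffunE !mxE.
Qed.

End MonomialDerivative.

Definition topmx n m K (u : {ffun 'I_K.+1 -> vec n.+1}) : 'M['F_2]_(m, K) :=
  \matrix_(j, i) b2f (u (lift ord0 i) (inord j)).

Definition addu n K (u v : {ffun 'I_K.+1 -> vec n}) : {ffun 'I_K.+1 -> vec n} :=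
  [ffun i => [ffun j => u i j (+) v i j]].

Lemma adduK n K (w : {ffun 'I_K.+1 -> vec n}) : involutive (fun v => addu v w).
Proof.
by move=> v; apply/ffunP => i; apply/ffunP => j; rewrite !ffunE -addbA addbb addbF.
Qed.

Lemma topmx_addu n m K (u v : {ffun 'I_K.+1 -> vec n.+1}) :
  topmx m (addu u v) = topmx m u + topmx m v.
Proof. by apply/matrixP => j i; rewrite !mxE !ffunE b2f_xor. Qed.

Definition indic (b : bool) : rat := (b : nat)%:R.

Lemma sum_indic (T : finType) (a : pred T) :
  \sum_(x : T) indic (a x) = (#|[set x | a x]|)%:R.
Proof.
rewrite -sum1dep_card natr_sum [RHS]big_mkcond.
by apply: eq_bigr => x _; case: (a x).
Qed.

Section Transfer.
Variables (n m K : nat) (hm : (m <= n.+1)%N).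

Definition embedmx (M : 'M['F_2]_(m, K)) : {ffun 'I_K.+1 -> vec n.+1} :=
  [ffun i => [ffun c => [exists j : 'I_m, exists i0 : 'I_K,
     (i == lift ord0 i0) && (c == inord j) && (M j i0 != 0)]]].

Lemma topmx_embedmx M : topmx m (embedmx M) = M.
Proof.
have inord_inj (j j' : 'I_m) : ((inord j : 'I_n.+1) == inord j') = (j == j').
  apply/eqP/eqP => [h|->//]; apply/val_inj; move/(congr1 val): h.
  by rewrite /= !inordK // (leq_trans _ hm).
apply/matrixP => j i; rewrite mxE !ffunE -[RHS]b2fK; congr b2f.
apply/existsP/idP => [[j' /existsP [i0]]|h].
  by rewrite inord_inj (inj_eq (@lift_inj _ ord0)) => /andP [/andP [/eqP -> /eqP ->]].
by exists j; apply/existsP; exists i; rewrite !eqxx h.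
Qed.

(* All fibres of the linear surjection [topmx] have the size of its kernel. *)
Lemma card_topmx_fibre (M : 'M['F_2]_(m, K)) :
  #|[set u : {ffun 'I_K.+1 -> vec n.+1} | topmx m u == M]| = #|[set u : {ffun 'I_K.+1 -> vec n.+1} | topmx m u == 0]|.
Proof.
rewrite -(card_preimset _ (inv_inj (adduK (embedmx M)))); apply: eq_card => v.
by rewrite !inE topmx_addu topmx_embedmx -subr_eq0 addrK.
Qed.

Lemma card_topmx_pred (Q : pred 'M['F_2]_(m, K)) :
  (#|[set u : {ffun 'I_K.+1 -> vec n.+1} | Q (topmx m u)]| * 2 ^ (m * K)
   = #|[set M | Q M]| * 2 ^ (K.+1 * n.+1))%N.
Proof.
pose kernel := #|[set u : {ffun 'I_K.+1 -> vec n.+1} | topmx m u == 0]|.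
have count (R : pred 'M['F_2]_(m, K)) :
    #|[set u : {ffun 'I_K.+1 -> vec n.+1} | R (topmx m u)]| = (#|[set M | R M]| * kernel)%N.
  rewrite -[LHS]sum1dep_card (@partition_big _ _ _ _ _ _ (fun u => R (topmx m u)) (fun u => topmx m u) R) //.
  rewrite -sum_nat_cond_const; apply: eq_bigr => M RM.
  rewrite sum1dep_card /kernel -(card_topmx_fibre M); apply: eq_card => u; rewrite !inE.
  by case: (topmx m u =P M) => [->|]; rewrite ?RM ?andbF.
have := count predT.
rewrite !cardsT card_ffun card_ffun card_bool !card_ord card_mx card_Fp // -expnM mulnC => ->.
by rewrite count mulnAC mulnA.
Qed.

End Transfer.

Lemma dt_transfer n m K (hm : (m <= n.+1)%N) (f : boolfun n.+1)
    (Q : pred 'M['F_2]_(m, K)) :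
  (forall u, Defs.deriv f u = Q (topmx m u)) ->
  dt K f = (\sum_(M : 'M['F_2]_(m, K)) indic (Q M)) / (2 ^ (m * K))%:R.
Proof.
move=> hQ; rewrite /dt sum_indic.
have -> : [set u | Defs.deriv f u] = [set u | Q (topmx m u)].
  by apply/setP => u; rewrite !inE hQ.
apply/eqP; rewrite eqr_div ?pnatr_eq0 ?expn_eq0 //.
by rewrite -!natrM card_topmx_pred.
Qed.

Lemma dt_ext n K (f g : boolfun n) : f =1 g -> dt K f = dt K g.
Proof.
move=> fg; rewrite /dt; congr (_%:R / _); apply: eq_card => u.
by rewrite !inE /Defs.deriv; under eq_bigr => c _ do rewrite fg.
Qed.

Lemma deriv_xor n K (f g : boolfun n) (u : {ffun 'I_K.+1 -> vec n}) :
  Defs.deriv (fun x => f x (+) g x) u = Defs.deriv f u (+) Defs.deriv g u.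
Proof. by rewrite /Defs.deriv big_split. Qed.

Lemma sum_col_mx (R : nmodType) (T : finType) m1 m2 n
    (F : 'M[T]_(m1, n) -> 'M[T]_(m2, n) -> R) :
  \sum_(M : 'M[T]_(m1 + m2, n)) F (usubmx M) (dsubmx M) = \sum_A \sum_B F A B.
Proof.
rewrite pair_bigA /= (reindex (fun p : 'M[T]_(m1, n) * 'M[T]_(m2, n) => col_mx p.1 p.2)).
  by apply: eq_bigr => p _; rewrite col_mxKu col_mxKd.
exists (fun M => (usubmx M, dsubmx M)) => [[A B] _|M _]; last by rewrite vsubmxK.
by rewrite col_mxKu col_mxKd.
Qed.

Lemma sum_row_mx (R : nmodType) (T : finType) m n1 n2
    (F : 'M[T]_(m, n1) -> 'M[T]_(m, n2) -> R) :
  \sum_(M : 'M[T]_(m, n1 + n2)) F (lsubmx M) (rsubmx M) = \sum_A \sum_B F A B.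
Proof.
rewrite pair_bigA /= (reindex (fun p : 'M[T]_(m, n1) * 'M[T]_(m, n2) => row_mx p.1 p.2)).
  by apply: eq_bigr => p _; rewrite row_mxKl row_mxKr.
exists (fun M => (lsubmx M, rsubmx M)) => [[A B] _|M _]; last by rewrite hsubmxK.
by rewrite row_mxKl row_mxKr.
Qed.

Lemma sum_mx_const (c : rat) a b : \sum_(M : 'M['F_2]_(a, b)) c = c * (2 ^ (a * b))%:R.
Proof. by rewrite sumr_const card_mx card_Fp // mulr_natr. Qed.

Definition ninv m : rat := \sum_(M : 'M['F_2]_m) indic (\det M != 0).

(* |GL_m(F_2)| / 2^(m^2) = 2^(m choose 2) prod_{i=1}^m (2^i - 1) / 2^(m^2) = P_m. *)
Lemma card_GL_ratio m :
  ((2%:R : rat) ^+ 'C(m, 2) * \prod_(1 <= i < m.+1) (2%:R ^+ i - 1))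
    / 2%:R ^+ (m * m) = P m.
Proof.
elim: m => [|m IH]; first by rewrite /P !big_geq // bin0n expr0 mul1r divr1.
rewrite [P m.+1]/P [in RHS]big_nat_recr //= -/(P m) -IH [in LHS]big_nat_recr //=.
rewrite binS bin1 (_ : (m.+1 * m.+1 = m * m + m + m.+1)%N); last by lia.
rewrite !exprD exprS natrX exprS.
have nz e : (2%:R : rat) ^+ e != 0 by rewrite expf_neq0.
move: (nz m) (nz (m * m)).
set a := 2 ^+ 'C(m, 2); set b := 2 ^+ m; set c := 2 ^+ (m * m).
set p := \prod_(_ <= _ < _) _ => hb hc.
by field; rewrite hb hc.
Qed.

Lemma ninv_density m : (0 < m)%N -> ninv m / (2 ^ (m * m))%:R = P m.
Proof.
case: m => // m _.
have -> : ninv m.+1 = (#|GLgroup m.+1 'F_2|)%:R.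
  rewrite cardsT /= card_sub /ninv sum_indic; congr (_%:R).
  by apply: eq_card => M; rewrite !inE unitmxE unitfE.
rewrite (card_GL _ (ltn0Sn m)) // card_Fp // -card_GL_ratio natrM natr_prod !natrX.
congr (_ * _ / _); apply: eq_big_nat => i /andP [hi _].
by rewrite natrB ?expn_gt0 // natrX.
Qed.

Lemma indic_xor a b : indic (a (+) b) = indic a + indic b - 2 * (indic a * indic b).
Proof. by case: a; case: b; rewrite /indic /=; ring. Qed.

Lemma sum_xor_pairs (X : finType) (a : pred X) :
  \sum_(x : X) \sum_(y : X) indic (a x (+) a y)
  = 2 * (\sum_x indic (a x)) * ((#|X|)%:R - \sum_x indic (a x)).
Proof.
set S := \sum_x indic (a x); set N : rat := (#|X|)%:R.
have row x : \sum_y indic (a x (+) a y) = indic (a x) * N + S - 2 * (indic (a x) * S).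
  rewrite (eq_bigr _ (fun y _ => indic_xor (a x) (a y))) sumrB big_split /=.
  by rewrite sumr_const -!mulr_sumr -/S mulr_natr.
rewrite (eq_bigr _ (fun x _ => row x)) sumrB big_split /= sumr_const.
rewrite -!mulr_sumr -!mulr_suml -/S -/N mulr_natr; ring.
Qed.

Section Completions.
Variables k t : nat.

Definition ncompl (T : 'M['F_2]_(t, k + t)) : rat :=
  \sum_(A : 'M['F_2]_(k, k + t)) indic (\det (col_mx A T) != 0).

Definition lowid : 'M['F_2]_(t, k + t) := dsubmx 1%:M.

Lemma ncompl_lowid : ncompl lowid = ninv k * (2 ^ (k * t))%:R.
Proof.
have lowidE : lowid = row_mx 0 1%:M by rewrite /lowid (scalar_mx_block k t 1) col_mxKd.
rewrite /ncompl (eq_bigr (fun A =>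
    indic (\det (col_mx (row_mx (lsubmx A) (rsubmx A)) lowid) != 0))); last first.
  by move=> A _; rewrite hsubmxK.
rewrite (sum_row_mx (fun A1 A2 => indic (\det (col_mx (row_mx A1 A2) lowid) != 0))) /ninv mulr_suml; apply: eq_bigr => A1 _.
rewrite -sum_mx_const; apply: eq_bigr => A2 _.
by rewrite lowidE -block_mxEv det_ublock det1 mulr1.
Qed.

(* If T has a completion C, right multiplication by C^-1 maps completions of T
   bijectively onto completions of (0 | I_t): the count is 0 or ncompl lowid. *)
Lemma ncompl_invariant T : ncompl T != 0 -> ncompl T = ncompl lowid.
Proof.
move=> /eqP nz.
case: (pickP (fun A : 'M['F_2]_(k, k + t) => \det (col_mx A T) != 0)) => [A1 hA1|none];
  last by case: nz; apply: big1 => A _; rewrite none.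
set C := col_mx A1 T.
have Cu : C \in unitmx by rewrite unitmxE unitfE.
have TC : T *m invmx C = lowid.
  by have := mulmxV Cu; rewrite /C mul_col_mx => h; rewrite /lowid -h col_mxKd.
rewrite /ncompl [RHS](reindex_inj (can_inj (mulmxKV Cu))) /=.
apply: eq_bigr => A _; rewrite -TC -mul_col_mx det_mulmx mulf_eq0.
have : \det (invmx C) != 0 by rewrite -unitfE -unitmxE unitmx_inv.
by move=> /negbTE ->; rewrite orbF.
Qed.

Lemma sum_ncompl : \sum_(T : 'M['F_2]_(t, k + t)) ncompl T = ninv (k + t).
Proof.
rewrite exchange_big /ninv -sum_col_mx; apply: eq_bigr => M _.
by rewrite vsubmxK.
Qed.

End Completions.

Lemma xvarE n (x : vec n.+1) i : (0 < i <= n.+1)%N -> xvar x i = x (inord i.-1).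
Proof.
move=> /andP [i_gt0 i_le]; apply/existsP/idP => [[j /andP [/eqP ji xj]]|xi].
  suff -> : inord i.-1 = j by [].
  by apply: ord_inj; rewrite inordK -ji //= ltnS -ltnS ji.
by exists (inord i.-1); rewrite xi andbT inordK ?prednK.
Qed.

Lemma monoE n (x : vec n.+1) a L : (a + L <= n.+1)%N ->
  mono a.+1 (a + L) x = monomial (fun j : 'I_L => (a + j)%N) x.
Proof.
move=> aL; rewrite /mono -{1}(add0n a.+1) big_addn subSS addKn big_mkord.
apply: eq_bigr => j _; rewrite xvarE; last by have := ltn_ord j; lia.
by rewrite addnS /= addnC.
Qed.

Lemma mono_empty n (x : vec n) a : mono a.+1 a x = true.
Proof. by rewrite /mono big_geq. Qed.

Lemma dt_monomial k n : (1 <= k)%N -> (k <= n)%N ->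
  dt k (fun x : vec n => mono 1 k x) = P k.
Proof.
case: n => [|n] k_gt0 kn; first by case: k k_gt0 kn.
rewrite (@dt_ext _ _ _ (monomial (fun j : 'I_k => (0 + j)%N))) => [|x]; last first.
  by rewrite -monoE.
rewrite (@dt_transfer _ k _ kn _ (fun M => \det M != 0)) ?ninv_density // => u.
by rewrite deriv_monomial.
Qed.

Section SharedBlock.
Variables k t : nat.

(* x_{2k+1}...x_{2k+t} (x_1...x_k + x_{k+1}...x_{2k}) is the xor of the
   monomials over the 0-based coordinates [shared_idx] and [second_idx]. *)
Definition shared_idx (j : 'I_(k + t)) : nat := if (j < k)%N then j : nat else (k + j)%N.
Definition second_idx (j : 'I_(k + t)) : nat := (k + j)%N.

Lemma mono_shared n (x : vec n.+1) : (k + k + t <= n.+1)%N ->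
  mono (2 * k).+1 (2 * k + t) x && (mono 1 k x (+) mono k.+1 (2 * k) x)
  = monomial shared_idx x (+) monomial second_idx x.
Proof.
move=> hn; rewrite mul2n -addnn -(add0n 1%N) !monoE; try lia.
rewrite andb_addr /monomial !big_split_ord andbC [X in _ (+) X]andbC.
congr (_ (+) _); congr (_ && _); apply: eq_bigr => j _ /=.
- by rewrite /shared_idx /= ltn_ord.
- by rewrite /shared_idx /= ltnNge leq_addr /= addnA.
- by rewrite /second_idx /= addnA.
Qed.

(* The event for M = (A; B; T), with blocks of k, k and t rows: exactly one
   of (A; T) and (B; T) is invertible. *)
Definition shared_event (M : 'M['F_2]_(k + k + t, k + t)) : bool :=
  (\det (col_mx (usubmx (usubmx M)) (dsubmx M)) != 0)
  (+) (\det (col_mx (dsubmx (usubmx M)) (dsubmx M)) != 0).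

Lemma deriv_shared n (u : {ffun 'I_(k + t).+1 -> vec n.+1}) :
  Defs.deriv (fun x => monomial shared_idx x (+) monomial second_idx x) u
  = shared_event (topmx (k + k + t) u).
Proof.
rewrite deriv_xor !deriv_monomial /shared_event; congr (_ (+) _); congr (\det _ != 0).
- apply/matrixP => j i; rewrite -[j](splitK j); case: (split j) => j' /=.
    by rewrite col_mxEu !mxE /shared_idx /= ltn_ord.
  by rewrite col_mxEd !mxE /shared_idx /= ltnNge leq_addr /= addnA.
- apply/matrixP => j i; rewrite -[j](splitK j); case: (split j) => j' /=.
    by rewrite col_mxEu !mxE.
  by rewrite col_mxEd !mxE /second_idx /= addnA.
Qed.

(* For each T, [sum_xor_pairs] counts the pairs (A, B); a nonzero number of
   completions of T always equals that of (0 | I_t). *)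
Lemma count_shared_event :
  \sum_(M : 'M['F_2]_(k + k + t, k + t)) indic (shared_event M)
  = 2 * ninv (k + t) * ((2 ^ (k * (k + t)))%:R - ninv k * (2 ^ (k * t))%:R).
Proof.
rewrite (sum_col_mx (fun AB T => indic ((\det (col_mx (usubmx AB) T) != 0)
                                       (+) (\det (col_mx (dsubmx AB) T) != 0)))).
rewrite exchange_big -ncompl_lowid -sum_ncompl mulr_sumr mulr_suml.
apply: eq_bigr => T _.
rewrite (sum_col_mx (fun A B => indic ((\det (col_mx A T) != 0) (+) (\det (col_mx B T) != 0)))).
rewrite sum_xor_pairs card_mx card_Fp //.
set N : rat := (2 ^ (k * (k + t)))%:R.
change (2 * ncompl T * (N - ncompl T) = 2 * ncompl T * (N - ncompl (lowid k t))).
have [->|/ncompl_invariant -> //] := eqVneq (ncompl T) 0.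
by rewrite mulr0 !mul0r.
Qed.

Lemma dt_shared n : (1 <= k)%N -> (2 * k + t <= n)%N ->
  dt (k + t) (fun x : vec n =>
     mono (2 * k).+1 (2 * k + t) x && (mono 1 k x (+) mono k.+1 (2 * k) x))
  = 2 * P (k + t) * (1 - P k).
Proof.
case: n => [|n] k_gt0 hn; first by lia.
have hm : (k + k + t <= n.+1)%N by lia.
rewrite (@dt_ext _ _ _ (fun x => monomial shared_idx x (+) monomial second_idx x));
  last by move=> x; apply: mono_shared.
rewrite (@dt_transfer _ (k + k + t) _ hm _ shared_event); last exact: deriv_shared.
rewrite count_shared_event -(ninv_density k_gt0) -(@ninv_density (k + t)) ?addn_gt0 ?k_gt0 //.
have pow2D a b : (2 ^ (a + b))%:R = (2 ^ a)%:R * (2 ^ b)%:R :> rat by rewrite expnD natrM.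
rewrite (_ : ((k + k + t) * (k + t) = k * k + k * t + (k + t) * (k + t))%N); last by ring.
rewrite mulnDr !pow2D.
have nz e : (2 ^ e)%:R != 0 :> rat by rewrite pnatr_eq0 expn_eq0.
move: (nz (k * k)) (nz (k * t)) (nz ((k + t) * (k + t))).
set a := (2 ^ (k * k))%:R; set b := (2 ^ (k * t))%:R; set c := (2 ^ ((k + t) * (k + t)))%:R.
by move=> ha hb hc; field; rewrite ha hb hc.
Qed.

End SharedBlock.

Theorem corollary2 (k t : nat) (hk : (1 <= k)%N) :
  (forall n : nat, (k <= n)%N ->
     dt k (fun x : vec n => mono 1 k x) = P k) /\
  (forall n : nat, (2 * k <= n)%N ->
     dt k (fun x : vec n => mono 1 k x (+) mono k.+1 (2 * k) x)
       = 2 * P k * (1 - P k)) /\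
  (forall n : nat, (2 * k + t <= n)%N ->
     dt (k + t) (fun x : vec n =>
          mono (2 * k).+1 (2 * k + t) x && (mono 1 k x (+) mono k.+1 (2 * k) x))
       = 2 * P (k + t) * (1 - P k)).
Proof.
split; first by move=> n; apply: dt_monomial.
split; last by move=> n; apply: dt_shared.
move=> n hn; have := @dt_shared k 0 n hk; rewrite !addn0 => /(_ hn) <-.
by apply: dt_ext => x; rewrite mono_empty.
Qed.
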